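(* Let $G$ be a finite group and let $N$ be a non-trivial normal subgroup of $G$ with $|N|=p^a$ for some prime $p$. Then for every pair $x_1,x_2$ of elements of $G$ there exist $n_1,n_2\in N$ such that $p$ divides the order of $\langle x_1n_1,x_2n_2\rangle$. *)

From mathcomp Require Import all_boot all_fingroup.

From mathcomp Require Import all_boot all_fingroup.
From mathcomp Require Import all_solvable.
Local Open Scope group_scope.

(* If p divided the order of none of the groups H(n1, n2) = <x1 n1, x2 n2>,
   each of them would be a complement of the p-group N in the common join
   N <x1, x2>.  By Schur-Zassenhaus these complements are all N-conjugate,
   so there are at most |N| of them.  But H(n1, n2) meets the coset x_i N
   only in x_i n_i, so the |N|^2 pairs (n1, n2) give distinct groups. *)

Lemma card_coprime_complements_le (gT : finGroupType) (N M : {group gT})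
    (S : {set {group gT}}) :
  solvable N ->
  {in S, forall K : {group gT},
     [/\ K \subset 'N(N), coprime #|N| #|K| & N <*> K = M]} ->
  #|S| <= #|N|.
Proof.
move=> solN complS.
have [-> | [K0 SK0]] := set_0Vmem S; first by rewrite cards0.
have [nNK0 coNK0 defM0] := complS K0 SK0.
have sS_conjK0 : S \subset [set (K0 :^ y)%G | y in N].
  apply/subsetP => K SK; have [nNK coNK defM] := complS K SK.
  have oK : #|K| = #|K0|.
    apply/eqP; rewrite -(eqn_pmul2l (cardG_gt0 N)) -!coprime_cardMg //.
    by rewrite -!norm_joinEr // defM defM0.
  have sK_NK0 : K \subset N * K0.
    by rewrite -norm_joinEr // defM0 -defM joing_subr.
  have [y Ny defK] := SchurZassenhaus_trans_sol solN nNK0 sK_NK0 coNK0 oK.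
  by apply/imsetP; exists y => //; apply: val_inj.
exact: leq_trans (subset_leq_card sS_conjK0) (leq_imset_card _ _).
Qed.

Section CosetGenerators.

Set Implicit Arguments.
Unset Strict Implicit.

Variables (gT : finGroupType) (N : {group gT}) (x1 x2 : gT).

Definition coset_gens (n : gT * gT) : {group gT} :=
  generated_group [set x1 * n.1; x2 * n.2].

Lemma mem_coset_gens1 u : x1 * u.1 \in coset_gens u.
Proof. by rewrite mem_gen ?setU11. Qed.

Lemma mem_coset_gens2 u : x2 * u.2 \in coset_gens u.
Proof. by rewrite mem_gen // !inE eqxx orbT. Qed.

Lemma mulg_mem_join (H : {group gT}) x n m :
  n \in N -> m \in N -> x * m \in H -> x * n \in N <*> H.
Proof.
move=> Nn Nm Hxm; rewrite -[x](mulgK m) -mulgA groupM //.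
  by rewrite (subsetP (joing_subr N H)).
by rewrite (subsetP (joing_subl N H)) // groupM ?groupV.
Qed.

Lemma coset_gens_sub_join u v :
  u \in setX N N -> v \in setX N N -> coset_gens u \subset N <*> coset_gens v.
Proof.
case: u v => [n1 n2] [m1 m2] /setXP[Nn1 Nn2] /setXP[Nm1 Nm2].
rewrite gen_subG; apply/subsetP => z; rewrite !inE => /orP[]/eqP->.
  exact: (mulg_mem_join Nn1 Nm1 (mem_coset_gens1 (m1, m2))).
exact: (mulg_mem_join Nn2 Nm2 (mem_coset_gens2 (m1, m2))).
Qed.

Lemma join_coset_gens u v :
  u \in setX N N -> v \in setX N N -> N <*> coset_gens u = N <*> coset_gens v.
Proof.
move=> Du Dv; apply/eqP; rewrite eqEsubset !(join_subG N (coset_gens _)).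
by rewrite !joing_subl !coset_gens_sub_join.
Qed.

Lemma coset_gens_subG (G : {group gT}) u :
    N \subset G -> x1 \in G -> x2 \in G -> u \in setX N N ->
  coset_gens u \subset G.
Proof.
case: u => n1 n2 sNG Gx1 Gx2 /setXP[Nn1 Nn2].
rewrite gen_subG; apply/subsetP => z; rewrite !inE => /orP[]/eqP->;
  by rewrite groupM // (subsetP sNG).
Qed.

Lemma TI_mulg_inj (H : {group gT}) x n m :
  N :&: H = 1 -> n \in N -> m \in N -> x * n \in H -> x * m \in H -> n = m.
Proof.
move=> tiNH Nn Nm Hxn Hxm; apply/eqP; rewrite eq_mulVg1; apply/eqP/set1gP.
rewrite -tiNH inE groupM ?groupV //=.
have -> : n^-1 * m = (x * n)^-1 * (x * m) by rewrite invMg -mulgA mulKg.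
by rewrite groupM ?groupV.
Qed.

Lemma coset_gens_inj u v :
  u \in setX N N -> v \in setX N N -> N :&: coset_gens u = 1 ->
  coset_gens u = coset_gens v -> u = v.
Proof.
case: u v => [n1 n2] [m1 m2] /setXP[Nn1 Nn2] /setXP[Nm1 Nm2] tiNH eqH.
congr (_, _).
  apply: (TI_mulg_inj tiNH Nn1 Nm1 (mem_coset_gens1 _)).
  by rewrite eqH (mem_coset_gens1 (m1, m2)).
apply: (TI_mulg_inj tiNH Nn2 Nm2 (mem_coset_gens2 _)).
by rewrite eqH (mem_coset_gens2 (m1, m2)).
Qed.

End CosetGenerators.

Theorem lemma2p3 (gT : finGroupType) (G N : {group gT}) (p a : nat) :
  prime p -> N <| G -> N :!=: 1 -> #|N| = (p ^ a)%N ->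
  forall x1 x2 : gT, x1 \in G -> x2 \in G ->
  exists n1 n2 : gT, [/\ n1 \in N, n2 \in N &
    p %| #|<<[set x1 * n1; x2 * n2]>>| ].
Proof.
move=> pr_p nsNG ntN oN x1 x2 Gx1 Gx2; have [sNG nNG] := andP nsNG.
set H := coset_gens x1 x2; set D := setX N N.
have [/exists_inP[[n1 n2] /setXP[Nn1 Nn2] p_dvd] | ] :=
  boolP [exists u in D, p %| #|H u|]; first by exists n1, n2.
rewrite negb_exists_in => /forall_inP p'H; exfalso.
have coNH u : u \in D -> coprime #|N| #|H u|.
  by move=> Du; rewrite oN coprimeXl // prime_coprime ?p'H.
have solN : solvable N.
  by apply: (@pgroup_sol _ p); rewrite /pgroup oN pnatX pnat_id.
have D11 : (1, 1) \in D by rewrite !inE group1.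
have le_HD_N : #|[set H u | u in D]| <= #|N|.
  apply: (@card_coprime_complements_le _ N (joing_group N (H (1, 1))) _ solN).
  move=> _ /imsetP[u Du ->]; split; last exact: join_coset_gens.
    exact: subset_trans (coset_gens_subG sNG Gx1 Gx2 Du) nNG.
  exact: coNH.
have card_HD : #|[set H u | u in D]| = (#|N| * #|N|)%N.
  rewrite card_in_imset ?cardsX // => u v Du Dv.
  exact/(coset_gens_inj Du Dv)/coprime_TIg/coNH.
move: le_HD_N; rewrite card_HD -{3}(muln1 #|N|) leq_pmul2l ?cardG_gt0 //.
by rewrite leqNgt cardG_gt1 ntN.
Qed.
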